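(* Let $p\in(0,1]$, let $(\mathcal M,d,0)$ be a finite pointed $p$-metric space and let $M_1,M_2\subset\mathcal M$ satisfy $M_1\cup M_2=\mathcal M$, $0\in M_2$, $M_1\cap M_2=\{x_0\}$ for some $x_0\in\mathcal M\setminus\{0\}$, and $|M_1|\ge2$. Let $\mathcal M_1=(M_1,d,x_0)$ and $\mathcal M_2=(M_2,d,0)$. Let $T\in\mathcal T(\mathcal M)$, $T_1\in\mathcal T(\mathcal M_1)$ (rooted at $x_0$), $T_2\in\mathcal T(\mathcal M_2)$ (rooted at $0$) be such that $E^T=E^{T_1}\cup E^{T_2}$. Let $a\in\mathbb R^{\mathcal M\setminus\{0\}}$, $a_1:=a|_{M_1\setminus\{x_0\}}$, and $a_2\in\mathbb R^{M_2\setminus\{0\}}$ defined by $a_2(y)=a(y)$ for $y\in M_2\setminus\{0,x_0\}$ and $a_2(x_0)=\sum_{w\in M_1}a(w)$. Then \[T(a)^p=T_1(a_1)^p+T_2(a_2)^p.\]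
   Context: A $p$-metric space is a set with $d$ such that $d^p$ is a metric; pointed means a distinguished base point. For a finite pointed $p$-metric space $(\mathcal K,d,r)$, $\mathcal T(\mathcal K)$ is the set of trees with vertex set $\mathcal K$ rooted at $r$; $E^T$ denotes the (unordered) edge set of $T$. For $x\ne r$, $\mathrm{pred}_T(x)$ is the neighbour of $x$ on the path to $r$, $e_x^T=\{\mathrm{pred}_T(x),x\}$, and $V_x^T$ is the vertex set of the subtree rooted at $x$. For $b\in\mathbb R^{\mathcal K\setminus\{r\}}$, $T(b)=\big(\sum_{x\in\mathcal K\setminus\{r\}}|(\sum_{y\in V_x^T}b_y)\,d(e_x^T)|^p\big)^{1/p}$. *)

From HB Require Import structures.
From mathcomp Require Import all_boot all_order all_algebra.
From mathcomp Require Import reals exp.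
Set Implicit Arguments. Unset Strict Implicit. Unset Printing Implicit Defensive.
Import Order.TTheory GRing.Theory Num.Theory.
Local Open Scope ring_scope.

Definition is_pmetric (R : realType) (K : finType) (p : R) (d : K -> K -> R) : Prop :=
  [/\ forall x y, 0 <= d x y,
      forall x y, d x y = 0 <-> x = y,
      forall x y, d x y = d y x
    & forall x y z, powR (d x z) p <= powR (d x y) p + powR (d y z) p].

(* A tree with vertex set V rooted at r, encoded by its predecessor map
   par (par x = pred_T(x) for x in V, x != r; par r = r): every vertex of V
   is mapped into V and reaches the root by iterating par. *)
Definition is_rooted_tree (K : finType) (V : {set K}) (r : K) (par : K -> K) : Prop :=
  [/\ r \in V, par r = r
    & forall x, x \in V -> par x \in V /\ exists n, iter n par x = r].

Definition tree_edges (K : finType) (V : {set K}) (r : K) (par : K -> K) : {set {set K}} :=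
  [set [set par x; x] | x in V :\ r].

Definition subtree (K : finType) (V : {set K}) (par : K -> K) (x : K) : {set K} :=
  [set y in V | [exists n : 'I_#|K|.+1, iter n par y == x]].

Definition tree_norm (R : realType) (K : finType) (p : R) (d : K -> K -> R)
    (V : {set K}) (r : K) (par : K -> K) (b : K -> R) : R :=
  powR (\sum_(x in V :\ r) powR `|(\sum_(y in subtree V par x) b y) * d (par x) x| p)
       p^-1.

From HB Require Import structures.
From mathcomp Require Import all_boot all_order all_algebra.
From mathcomp Require Import reals exp.
Set Implicit Arguments. Unset Strict Implicit. Unset Printing Implicit Defensive.
Import Order.TTheory GRing.Theory Num.Theory.
Local Open Scope ring_scope.

(* Every edge of T1 lies in M1 and every edge of T2 in M2, and M1 and M2 only
   share x0; so the T-edge at a vertex x of M1 \ {x0} is a T1-edge and the one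
   at x in M2 \ {0} a T2-edge. As a rooted tree is determined by its edges,
   pred_T coincides with pred_T1, resp. pred_T2, there. Consequently the
   T-subtree at x in M1 \ {x0} is the T1-subtree, while the T-subtree at x in
   M2 \ {0} is the T2-subtree with x0 blown up to all of M1 whenever it
   contains x0; summing a over it therefore gives the T2-subtree sum of a2.
   Splitting the sum defining T(a)^p along the partition of M \ {0} into
   M1 \ {x0} and M2 \ {0} gives the identity. *)

Section FunctionalPaths.

Variable T : finType.
Implicit Types (f g : T -> T) (A : {pred T}).

Lemma fconnect_iterP f x y : reflect (exists n, iter n f x = y) (fconnect f x y).
Proof.
apply: (iffP idP) => [/iter_findex <-|[n <-]]; last exact: fconnect_iter.
by exists (findex f x y).
Qed.

Lemma fconnect_homo A f x y :
  {homo f : u / u \in A} -> x \in A -> fconnect f x y -> y \in A.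
Proof. by move=> fA xA /fconnect_iterP[n <-]; exact: iter_in. Qed.

Lemma fconnect_exit (A : {set T}) f r x y :
  {in A :\ r, forall u, f u \in A} -> x \in A -> y \notin A ->
  fconnect f x y -> fconnect f x r && fconnect f r y.
Proof.
move=> fA + yA /fconnect_iterP[n yx]; rewrite -{}yx in yA *.
elim: n x yA => [|n IHn] x yA xA; first by rewrite xA in yA.
have [->|xr] := eqVneq x r; first by rewrite connect0 fconnect_iter.
have fxA : f x \in A by apply: fA; rewrite !inE xr xA.
rewrite iterSr in yA *; have /andP[fxr ->] := IHn _ yA fxA.
by rewrite (connect_trans (fconnect1 f x) fxr).
Qed.

Lemma iter_eq_in (A : {set T}) f g x n :
  {in A, f =1 g} -> (forall k, (k < n)%N -> iter k f x \in A) ->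
  iter n f x = iter n g x.
Proof.
move=> fg; elim: n => //= n IHn fxA.
by rewrite -IHn ?fg ?fxA // => k /ltnW; exact: fxA.
Qed.

End FunctionalPaths.

Lemma eq_set2 (T : finType) (a b c d : T) :
  [set a; b] = [set c; d] -> a = c /\ b = d \/ a = d /\ b = c.
Proof.
move=> abcd.
have: a \in [set c; d] by rewrite -abcd set21.
have: b \in [set c; d] by rewrite -abcd set22.
have: c \in [set a; b] by rewrite abcd set21.
have: d \in [set a; b] by rewrite abcd set22.
by do 4 case/set2P=> ?; subst; auto.
Qed.

Section RootedTrees.

Variable K : finType.
Implicit Types (V : {set K}) (f g : K -> K).

Lemma subtreeE V f x : subtree V f x = [set y in V | fconnect f y x].
Proof.
apply/setP => y; rewrite !inE; congr (_ && _).
apply/existsP/idP => [[n /eqP <-]|yx]; first exact: fconnect_iter.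
have lt_yx : (findex f y x < #|K|.+1)%N.
  by rewrite ltnS (leq_trans (ltnW (findex_max yx))) ?max_card.
by exists (Ordinal lt_yx); rewrite /= iter_findex.
Qed.

Lemma rooted_tree_homo V r f : is_rooted_tree V r f -> {homo f : u / u \in V}.
Proof. by case=> _ _ fV u /fV[]. Qed.

Lemma rooted_tree_reach V r f x : is_rooted_tree V r f -> x \in V -> fconnect f x r.
Proof. by case=> _ _ fV /fV[_ /fconnect_iterP]. Qed.

Lemma rooted_tree_iter_in V r f x n k :
  is_rooted_tree V r f -> x \in V -> iter n f x != r -> (k <= n)%N ->
  iter k f x \in V :\ r.
Proof.
move=> T xV + kn; rewrite -(subnK kn) iterD => nr.
rewrite !inE (iter_in k (rooted_tree_homo T) xV) andbT.
by apply: contraNneq nr => ->; rewrite iter_fix //; case: T.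
Qed.

Lemma rooted_tree_iter_eq V r f g x n :
  is_rooted_tree V r f -> g r = r -> {in V :\ r, f =1 g} -> x \in V ->
  iter n f x = iter n g x.
Proof.
move=> T gr fg xV; elim: n => //= n <-.
have [->|nr] := eqVneq (iter n f x) r; first by rewrite gr; case: T.
by rewrite fg // !inE nr (iter_in n (rooted_tree_homo T) xV).
Qed.

Lemma tree_edges_sub V r f e : is_rooted_tree V r f -> e \in tree_edges V r f -> e \subset V.
Proof.
move=> /rooted_tree_homo fV /imsetP[x /setD1P[_ xV] ->].
by apply/subsetP => y /set2P[]->; rewrite ?fV.
Qed.

Lemma tree_pred_eq_of_edges V r o f g x :
  o \notin V :\ r -> {in V :\ r, forall u, [set g u; u] \in tree_edges V r f} ->
  x \in V :\ r -> fconnect g x o -> f x = g x.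
Proof.
move=> oV gE + /fconnect_iterP[n]; elim: n x => [|n IHn] x xV xo.
  by rewrite -xo xV in oV.
have [z zV /eq_set2[[gxz xz]|[gxz xfz]]] := imsetP (gE x xV).
  by rewrite gxz xz.
(* Here the edge at x is also the edge at z = g x, so by induction g swaps x
   and z and could never reach o. *)
have fgz : f z = g z by apply: IHn; rewrite // -gxz -iterSr.
have cyc : {homo g : u / u \in [set x; g x]}.
  by move=> u /set2P[]->; [exact: set22 | rewrite gxz -fgz -xfz set21].
have reach_o : fconnect g x o by apply/fconnect_iterP; exists n.+1.
have /set2P[oxg|oxg] := fconnect_homo cyc (set21 x (g x)) reach_o; rewrite oxg in oV.
  by rewrite xV in oV.
by rewrite gxz zV in oV.
Qed.

End RootedTrees.

Definition tree_sum (R : realType) (K : finType) (p : R) (d : K -> K -> R)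
    (V : {set K}) (r : K) (par : K -> K) (b : K -> R) : R :=
  \sum_(x in V :\ r) powR `|(\sum_(y in subtree V par x) b y) * d (par x) x| p.

Lemma tree_normE (R : realType) (K : finType) (p : R) (d : K -> K -> R) V r par b :
  0 < p -> powR (tree_norm p d V r par b) p = tree_sum p d V r par b.
Proof.
move=> p_gt0; rewrite -powRrM mulVf ?gt_eqF // powRr1 //.
by apply: sumr_ge0 => x _; exact: powR_ge0.
Qed.

Section Gluing.

Variables (K : finType) (o x0 : K) (M1 M2 : {set K}) (par par1 par2 : K -> K).
Hypotheses (M12U : M1 :|: M2 = [set: K]) (M12I : M1 :&: M2 = [set x0]).
Hypotheses (oM2 : o \in M2) (x0o : x0 != o).
Hypotheses (T : is_rooted_tree [set: K] o par)
  (T1 : is_rooted_tree M1 x0 par1) (T2 : is_rooted_tree M2 o par2).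
Hypothesis E12 : tree_edges [set: K] o par = tree_edges M1 x0 par1 :|: tree_edges M2 o par2.

Lemma mem_M12 y : (y \in M1) && (y \in M2) = (y == x0).
Proof. by rewrite -in_setI M12I inE. Qed.

Lemma x0_M1 : x0 \in M1.
Proof. by have /andP[] : (x0 \in M1) && (x0 \in M2) by rewrite mem_M12. Qed.

Lemma x0_M2 : x0 \in M2.
Proof. by have /andP[] : (x0 \in M1) && (x0 \in M2) by rewrite mem_M12. Qed.

Lemma o_notin_M1 : o \notin M1.
Proof. by apply: contra x0o => oM1; rewrite eq_sym -mem_M12 oM1. Qed.

Lemma notin_M1 y : y != x0 -> (y \notin M1) = (y \in M2).
Proof.
move=> yx0; have : y \in M1 :|: M2 by rewrite M12U inE.
by have := mem_M12 y; rewrite inE (negPf yx0); case: (y \in M1); case: (y \in M2).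
Qed.

Lemma notin_M2 y : y \notin M2 -> y \in M1 :\ x0.
Proof.
move=> yM2; have yx0 : y != x0 by apply: contraNneq yM2 => ->; exact: x0_M2.
by rewrite !inE yx0 -[y \in M1]negbK notin_M1.
Qed.

Lemma par_edge x : x != o ->
  [set par x; x] \in tree_edges M1 x0 par1 :|: tree_edges M2 o par2.
Proof. by move=> xo; rewrite -E12; apply: imset_f; rewrite !inE xo. Qed.

Lemma par_edge_T1 x : x \in M1 :\ x0 -> [set par x; x] \in tree_edges M1 x0 par1.
Proof.
case/setD1P => xx0 xM1; have xo : x != o by apply: contraNneq o_notin_M1 => <-.
have /setUP[//|/(tree_edges_sub T2)/subsetP/(_ x (set22 _ _)) xM2] := par_edge xo.
by have := mem_M12 x; rewrite xM1 xM2 (negPf xx0).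
Qed.

Lemma par1_eq : {in M1 :\ x0, par1 =1 par}.
Proof.
move=> x xM; apply: (tree_pred_eq_of_edges (o := o)) par_edge_T1 xM _.
  by rewrite !inE (negPf o_notin_M1) andbF.
exact: rooted_tree_reach T (in_setT x).
Qed.

Lemma par_M1 : {in M1 :\ x0, forall u, par u \in M1}.
Proof. by move=> u uM; rewrite -par1_eq // (rooted_tree_homo T1); case/setD1P: uM. Qed.

Lemma par_x0_notin_M1 : par x0 \notin M1.
Proof.
apply/negP => pM1; have M1par : {homo par : u / u \in M1}.
  by move=> u uM; have [->//|ux0] := eqVneq u x0; rewrite par_M1 // !inE ux0.
have := fconnect_homo M1par x0_M1 (rooted_tree_reach T (in_setT x0)).
by rewrite (negPf o_notin_M1).
Qed.

Lemma par_edge_T2 x : x \in M2 :\ o -> [set par x; x] \in tree_edges M2 o par2.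
Proof.
case/setD1P => xo xM2; have /setUP[/(tree_edges_sub T1)/subsetP sM1|//] := par_edge xo.
have xx0 : x = x0 by apply/eqP; rewrite -mem_M12 sM1 ?set22.
by have := sM1 _ (set21 _ _); rewrite xx0 (negPf par_x0_notin_M1).
Qed.

Lemma par2_eq : {in M2 :\ o, par2 =1 par}.
Proof.
move=> x xM; apply: (tree_pred_eq_of_edges (o := o)) par_edge_T2 xM _.
  by rewrite setD11.
exact: rooted_tree_reach T (in_setT x).
Qed.

Lemma par_o : par o = o.
Proof. by case: T. Qed.

Lemma par_M2 : {homo par : u / u \in M2}.
Proof.
move=> u uM; have [->|uo] := eqVneq u o; first by rewrite par_o.
by rewrite -par2_eq ?inE ?uo // (rooted_tree_homo T2 uM).
Qed.

Lemma mem_subtree x y : (y \in subtree [set: K] par x) = fconnect par y x.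
Proof. by rewrite subtreeE !inE. Qed.

Lemma subtree_par1 x : x \in M1 :\ x0 -> subtree [set: K] par x = subtree M1 par1 x.
Proof.
move=> xM; have [xx0 xM1] := setD1P xM.
have xM2 : x \notin M2 by rewrite -notin_M1 ?xM1.
apply/setP => y; rewrite mem_subtree subtreeE inE.
apply/fconnect_iterP/andP => [[n yx]|[yM1 /fconnect_iterP[n yx]]].
  have pathM1 k : (k <= n)%N -> iter k par y \in M1 :\ x0.
    move=> kn; apply: notin_M2; apply: contra xM2 => kM2.
    by rewrite -yx -(subnK kn) iterD (iter_in _ par_M2 kM2).
  split; first by have /setD1P[] := pathM1 0%N (leq0n n).
  apply/fconnect_iterP; exists n; rewrite -yx.
  symmetry; apply: (iter_eq_in (A := M1 :\ x0)) => [u /par1_eq-> // | k /ltnW].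
  exact: pathM1.
exists n; rewrite -yx; symmetry; apply: iter_eq_in par1_eq _ => k /ltnW.
by apply: (rooted_tree_iter_in T1 yM1); rewrite yx.
Qed.

Lemma subtreeI_M2 x : subtree [set: K] par x :&: M2 = subtree M2 par2 x.
Proof.
apply/setP => y; rewrite inE mem_subtree subtreeE inE andbC.
have [yM2|//] := boolP (y \in M2).
have eq_iter n : iter n par2 y = iter n par y := rooted_tree_iter_eq n T2 par_o par2_eq yM2.
by apply/fconnect_iterP/fconnect_iterP => -[n <-]; exists n; rewrite eq_iter.
Qed.

Lemma mem_subtree_M1 x y : x \in M2 -> y \in M1 ->
  (y \in subtree [set: K] par x) = (x0 \in subtree [set: K] par x).
Proof.
move=> xM2 yM1; rewrite !mem_subtree; apply/idP/idP => [yx|x0x].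
  have [->|xx0] := eqVneq x x0; first exact: connect0.
  have xM1 : x \notin M1 by rewrite notin_M1.
  by case/andP: (fconnect_exit par_M1 yM1 xM1 yx).
have /andP[yx0 _] := fconnect_exit par_M1 yM1 o_notin_M1 (rooted_tree_reach T (in_setT y)).
exact: connect_trans yx0 x0x.
Qed.

Definition contract (R : nmodType) (a : K -> R) y :=
  if y == x0 then \sum_(w in M1) a w else a y.

Lemma sum_contract (R : nmodType) (a : K -> R) (S : {set K}) :
  {in M1, forall y, (y \in S) = (x0 \in S)} ->
  \sum_(y in S) a y = \sum_(y in S :&: M2) contract a y.
Proof.
move=> SM1; rewrite (big_setID M1) /=.
have -> : S :\: M1 = (S :&: M2) :\ x0.
  apply/setP => y; rewrite !inE; have [->|yx0] /= := eqVneq y x0; first by rewrite x0_M1.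
  by rewrite notin_M1 // andbC.
have -> : \sum_(y in (S :&: M2) :\ x0) a y = \sum_(y in (S :&: M2) :\ x0) contract a y.
  by apply: eq_bigr => y /setD1P[yx0 _]; rewrite /contract (negPf yx0).
have [x0S|x0S] := boolP (x0 \in S).
  have -> : S :&: M1 = M1 by apply/setIidPr/subsetP => y yM1; rewrite SM1.
  by rewrite [RHS](big_setD1 x0) ?inE ?x0S ?x0_M2 // /contract eqxx.
have -> : S :&: M1 = set0.
  by apply/setP => y; rewrite !inE andbC; case yM1: (y \in M1); rewrite /= ?SM1 ?(negPf x0S).
rewrite big_set0 add0r; apply: eq_bigl => y; rewrite !inE.
by case: eqP => // ->; rewrite (negPf x0S).
Qed.

Lemma tree_sum_glue (R : realType) (p : R) (d : K -> K -> R) (a : K -> R) :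
  tree_sum p d [set: K] o par a =
    tree_sum p d M1 x0 par1 a + tree_sum p d M2 o par2 (contract a).
Proof.
rewrite /tree_sum (big_setID M2) [LHS]addrC /=.
have -> : ([set: K] :\ o) :\: M2 = M1 :\ x0.
  apply/setP => y; rewrite !inE andbT; have [yM2|yM2] /= := boolP (y \in M2).
    by rewrite -mem_M12 yM2 andbT andNb.
  have /setD1P[-> ->] := notin_M2 yM2.
  by apply: contraNneq yM2 => ->.
have -> : ([set: K] :\ o) :&: M2 = M2 :\ o by apply/setP => y; rewrite !inE andbT.
congr (_ + _); apply: eq_bigr => x xM.
  by rewrite subtree_par1 // par1_eq.
have [_ xM2] := setD1P xM.
rewrite -subtreeI_M2 -sum_contract; first by rewrite par2_eq.
by move=> y; exact: mem_subtree_M1.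
Qed.

End Gluing.

Theorem lemma3p13 (R : realType) (p : R) (K : finType) (d : K -> K -> R) (o : K)
    (M1 M2 : {set K}) (x0 : K)
    (par par1 par2 : K -> K) (a : K -> R) :
  0 < p -> p <= 1 ->
  is_pmetric p d ->
  M1 :|: M2 = [set: K] ->
  o \in M2 ->
  x0 != o ->
  M1 :&: M2 = [set x0] ->
  (1 < #|M1|)%N ->
  is_rooted_tree [set: K] o par ->
  is_rooted_tree M1 x0 par1 ->
  is_rooted_tree M2 o par2 ->
  tree_edges [set: K] o par = tree_edges M1 x0 par1 :|: tree_edges M2 o par2 ->
  let a2 := fun y => if y == x0 then \sum_(w in M1) a w else a y in
  powR (tree_norm p d [set: K] o par a) p =
    powR (tree_norm p d M1 x0 par1 a) p + powR (tree_norm p d M2 o par2 a2) p.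
Proof.
move=> p_gt0 _ _ M12U oM2 x0o M12I _ T T1 T2 E12 a2.
rewrite [LHS]tree_normE // (tree_sum_glue M12U M12I oM2 x0o T T1 T2 E12).
by congr (_ + _); rewrite tree_normE.
Qed.
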